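(* Let $\mathcal E$ be a nest on a complex Banach space $X$ and let $\mathcal J$ be a $\mathcal T(\mathcal E)$-bimodule. Let $\mathcal J_0$ be the set of finite rank operators in $\mathcal J$ and $\overline{\mathcal J_0}$ its norm closure. Then $\Phi_{\mathcal J_0}=\Phi_{\overline{\mathcal J_0}}=\Phi_{\mathcal J}$.
   Context: A nest $\mathcal E$ on $X$ is a family of closed linear subspaces of $X$, totally ordered by inclusion, containing $\{0\}$ and $X$, closed under arbitrary meets (intersections) and joins (norm-closed linear spans of unions). $\mathcal T(\mathcal E)=\{T\in\mathcal B(X): TE\subseteq E\ \forall E\in\mathcal E\}$. A $\mathcal T(\mathcal E)$-bimodule is a linear subspace $\mathcal J\subseteq\mathcal B(X)$ with $\mathcal T(\mathcal E)\mathcal J\subseteq\mathcal J$ and $\mathcal J\mathcal T(\mathcal E)\subseteq\mathcal J$ ($\mathcal J_0$ and $\overline{\mathcal J_0}$ are again bimodules). For a bimodule $\mathcal J$, $\Phi_{\mathcal J}:\mathcal E\to\mathcal E$ is $\Phi_{\mathcal J}(E)=[\mathcal JE]$, the norm-closed linear span of $\{Tx:T\in\mathcal J,x\in E\}$. *)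

From HB Require Import structures.
From mathcomp Require Import all_boot all_order all_algebra.
From mathcomp Require Import all_classical all_reals all_analysis.
From mathcomp Require Import complex.
Import Order.TTheory GRing.Theory Num.Theory.
Import numFieldNormedType.Exports.

Set Implicit Arguments.
Unset Strict Implicit.
Unset Printing Implicit Defensive.

Local Open Scope classical_set_scope.
Local Open Scope ring_scope.

Section Nests.
Context {R : realType} {X : completeNormedModType R[i]}.

Definition lspan (S : set X) : set X :=
  [set v | exists (n : nat) (c : 'I_n -> R[i]) (s : 'I_n -> X),
             (forall i, S (s i)) /\ v = \sum_(i < n) c i *: s i].

Definition clspan (S : set X) : set X := closure (lspan S).

Definition closed_subspace (E : set X) : Prop :=
  [/\ closed E, E 0 & forall (a : R[i]) (u v : X), E u -> E v -> E (a *: u + v)].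

Definition bounded_op (T : X -> X) : Prop :=
  (forall (a : R[i]) (u v : X), T (a *: u + v) = a *: T u + T v) /\ continuous T.

Definition nest (N : set (set X)) : Prop :=
  [/\ (forall E, N E -> closed_subspace E),
      (forall E F, N E -> N F -> E `<=` F \/ F `<=` E),
      N [set 0] /\ N setT,
      (forall F, F `<=` N -> N (\bigcap_(E in F) E))
    & (forall F, F `<=` N -> N (clspan (\bigcup_(E in F) E)))].

Definition nest_alg (N : set (set X)) : set (X -> X) :=
  [set T | bounded_op T /\ forall E, N E -> forall x, E x -> E (T x)].

Definition bimodule (N : set (set X)) (J : set (X -> X)) : Prop :=
  [/\ (forall T, J T -> bounded_op T),
      J (fun _ => 0),
      (forall (a : R[i]) S T, J S -> J T -> J (fun x => a *: S x + T x)),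
      (forall A T, nest_alg N A -> J T -> J (A \o T))
    & (forall A T, nest_alg N A -> J T -> J (T \o A))].

Definition finite_rank (T : X -> X) : Prop :=
  exists (n : nat) (s : 'I_n -> X), range T `<=` lspan (range s).

Definition fin_rank_part (J : set (X -> X)) : set (X -> X) :=
  [set T | J T /\ finite_rank T].

(* Closure of a set of operators in B(X) for the operator norm:
   T is in it iff T is bounded and for all e > 0 there is S in J with
   ||T - S|| <= e, i.e. |T x - S x| <= e |x| for all x. *)
Definition op_norm_closure (J : set (X -> X)) : set (X -> X) :=
  [set T | bounded_op T /\
     forall e : R[i], 0 < e -> exists S, J S /\
        forall x : X, `|T x - S x| <= e * `|x|].

Definition Phi (J : set (X -> X)) (E : set X) : set X :=
  clspan [set y | exists T x, [/\ J T, E x & y = T x]].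

End Nests.

From HB Require Import structures.
From mathcomp Require Import all_boot all_order all_algebra.
From mathcomp Require Import all_classical all_reals all_analysis.
From mathcomp Require Import complex.
From mathcomp Require Import lra ring.
Import Order.TTheory GRing.Theory Num.Theory.
Import numFieldNormedType.Exports.
Local Open Scope classical_set_scope.
Local Open Scope ring_scope.
Local Open Scope complex_scope.
Set Implicit Arguments. Unset Strict Implicit.

(* For every E in N (in
   fact for every subset E of X) we prove the cycle of inclusions
        Phi_J0(E) <= Phi_cl(J0)(E) <= Phi_J(E) <= Phi_J0(E).
   The first is monotonicity of Phi, the second holds because T x is the norm
   limit of the vectors S x, S in J0.  The third is the heart of the matter:
   given T in J and x in E, Hahn-Banach yields bounded functionals f, vanishing
   on a suitable closed subspace M, with f z = 1 for some z in E; the rank one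
   operator u |-> f u *: y then lies in T(N), so T composed with it is a finite
   rank element of J sending z to T y.  Depending on whether E is contained in
   the closed span of the nest elements not containing x, this either gives
   T x directly or gives T y for all y in that span, which contains x. *)

Section NestBimodules.
Context {R : realType} {X : completeNormedModType R[i]}.

Lemma cs_scale (M : set X) a u : closed_subspace M -> M u -> M (a *: u).
Proof. by case=> _ Z L Mu; have := L a _ _ Mu Z; rewrite addr0. Qed.

Lemma cs_add (M : set X) u v : closed_subspace M -> M u -> M v -> M (u + v).
Proof. by case=> _ Z L Mu Mv; have := L 1 _ _ Mu Mv; rewrite scale1r. Qed.

Lemma cs_opp (M : set X) u : closed_subspace M -> M u -> M (- u).
Proof. by move=> cM Mu; rewrite -scaleN1r; exact: cs_scale. Qed.

(* The norm of X, which is a real element of R[i], seen in R; Hahn-Banach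
   is a statement about real functionals dominated by it. *)
Definition rnorm (x : X) : R := complex.Re `|x|.

Lemma rnormE (x : X) : `|x| = (rnorm x)%:C.
Proof. by rewrite /rnorm RRe_real // normr_real. Qed.

Lemma rnormD x y : rnorm (x + y) <= rnorm x + rnorm y.
Proof. by rewrite -lecR rmorphD /= -!rnormE ler_normD. Qed.

Lemma normcR (r : R) : `|r%:C| = `|r|%:C.
Proof. by rewrite normc_def /= expr0n /= addr0 sqrtr_sqr. Qed.

Lemma normi : `|'i : R[i]| = 1.
Proof. by rewrite normc_def /= expr0n expr1n add0r sqrtr1. Qed.

Lemma rnormZ (t : R) x : rnorm (t%:C *: x) = `|t| * rnorm x.
Proof. by apply: complexI; rewrite -rnormE normrZ normcR rnormE rmorphM. Qed.

Lemma rnormN x : rnorm (- x) = rnorm x.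
Proof. by apply: complexI; rewrite -!rnormE normrN. Qed.

Lemma rnormiZ x : rnorm ('i *: x) = rnorm x.
Proof. by apply: complexI; rewrite -!rnormE normrZ normi mul1r. Qed.

Section DominatedExtension.
Variable c : R.
Hypothesis c_ge0 : 0 <= c.

(* A is the graph of a real-linear functional defined on a real subspace of
   X and bounded above by c * rnorm. *)
Definition dominated_graph (A : set (X * R)) : Prop :=
  [/\ forall x r s, A (x, r) -> A (x, s) -> r = s,
      forall a x y r s, A (x, r) -> A (y, s) -> A (a%:C *: x + y, a * r + s),
      A (0, 0)
    & forall x r, A (x, r) -> r <= c * rnorm x].

Lemma dominated_graphZ A a x r :
  dominated_graph A -> A (x, r) -> A (a%:C *: x, a * r).
Proof. by case=> _ L Z _ H; have := L a _ _ _ _ H Z; rewrite !addr0. Qed.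

Lemma dominated_graphD A x y r s :
  dominated_graph A -> A (x, r) -> A (y, s) -> A (x + y, r + s).
Proof.
by case=> _ L _ _ H1 H2; have := L 1 _ _ _ _ H1 H2; rewrite scale1r mul1r.
Qed.

Definition admissible_value (A : set (X * R)) (z : X) (rho : R) : Prop :=
  (forall y s, A (y, s) -> s - c * rnorm (y - z) <= rho) /\
  (forall x r, A (x, r) -> rho <= c * rnorm (x + z) - r).

(* The classical one-dimensional step: the supremum is an admissible value,
   because the triangle inequality separates the two families of bounds. *)
Lemma admissible_value_exists A z :
  dominated_graph A -> exists rho, admissible_value A z rho.
Proof.
move=> gA; have [_ _ A00 _] := gA.
pose S := [set t | exists y s, A (y, s) /\ t = s - c * rnorm (y - z)].
have S0 : S !=set0 by exists (0 - c * rnorm (0 - z)); exists 0, 0.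
have ubS x r : A (x, r) -> ubound S (c * rnorm (x + z) - r).
  move=> Axr _ [y [s [Ays ->]]].
  rewrite lerBrDr addrAC lerBlDr -mulrDr addrC.
  have [_ _ _ D] := gA; apply: le_trans (D _ _ (dominated_graphD gA Axr Ays)) _.
  apply: ler_wpM2l => //.
  have -> : x + y = (x + z) + (y - z) by rewrite addrACA subrr addr0.
  exact: rnormD.
have supS : has_sup S by split=> //; exists (c * rnorm (0 + z) - 0); exact: ubS.
exists (sup S); split.
- by move=> y s Ays; apply: sup_upper_bound => //; exists y, s.
- by move=> x r Axr; apply: ge_sup => //; exact: ubS.
Qed.

Definition graph_extend (A : set (X * R)) (z : X) (rho : R) : set (X * R) :=
  [set p | exists x r t, A (x, r) /\ p = (x + t%:C *: z, r + t * rho)].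

Lemma sub_graph_extend A z rho : A `<=` graph_extend A z rho.
Proof.
by move=> [x r] Axr; exists x, r, 0; split=> //; rewrite scale0r addr0 mul0r addr0.
Qed.

(* Domination of the extension: scale by |t| and use the bound on the side
   of rho matching the sign of t. *)
Lemma graph_extend_bound A z rho x r t :
  dominated_graph A -> admissible_value A z rho -> A (x, r) ->
  r + t * rho <= c * rnorm (x + t%:C *: z).
Proof.
move=> gA [rho_ge rho_le] Axr.
have [t0|t0|->] := ltgtP t 0; last first.
- by rewrite scale0r addr0 mul0r addr0; case: gA => _ _ _; apply.
- have := rho_le _ _ (dominated_graphZ t^-1 gA Axr) => h.
  have tn : t != 0 by rewrite gt_eqF.
  have -> : x + t%:C *: z = t%:C *: ((t^-1)%:C *: x + z).
    by rewrite scalerDr scalerA -rmorphM mulfV // scale1r.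
  rewrite rnormZ gtr0_norm //; set n := rnorm _ in h *.
  have := ler_wpM2l (ltW t0) h.
  have -> : t * (c * n - t^-1 * r) = c * (t * n) - r by field.
  lra.
- have := rho_ge _ _ (dominated_graphZ (- t)^-1 gA Axr) => h.
  have tn : - t != 0 by rewrite oppr_eq0 lt_eqF.
  have t0' : 0 < - t by rewrite oppr_gt0.
  have tn2 : t != 0 by rewrite lt_eqF.
  have -> : x + t%:C *: z = (- t)%:C *: (((- t)^-1)%:C *: x - z).
    rewrite scalerDr scalerA -rmorphM mulfV // scale1r.
    by rewrite rmorphN scaleNr scalerN opprK.
  rewrite rnormZ gtr0_norm //; set n := rnorm _ in h *.
  have := ler_wpM2l (ltW t0') h.
  have -> : - t * ((- t)^-1 * r - c * n) = r - c * (- t * n) by field.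
  lra.
Qed.

(* Extending at a point z outside the domain of A gives again a dominated
   graph; it is single-valued since x1 + t1 z = x2 + t2 z with t1 != t2
   would put z in the domain of A. *)
Lemma graph_extend_dominated A z rho :
  dominated_graph A -> (forall r, ~ A (z, r)) -> admissible_value A z rho ->
  dominated_graph (graph_extend A z rho).
Proof.
move=> gA nz adm; have [F L Z _] := gA.
split.
- move=> w u1 u2 [x1 [r1 [t1 [A1 [E1 ->]]]]] [x2 [r2 [t2 [A2 [E2 ->]]]]].
  have [et|nt] := eqVneq t1 t2.
    subst t2; move: E2; rewrite E1 => /addIr ex; subst x2.
    by rewrite (F _ _ _ A1 A2).
  exfalso; have tn : t1 - t2 != 0 by rewrite subr_eq0.
  have ez : z = ((t1 - t2)^-1)%:C *: (x2 + (-1)%:C *: x1).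
    have <- : x1 + (t1 - t2)%:C *: z = x2.
      by rewrite rmorphB scalerBl addrA -E1 E2 addrK.
    rewrite rmorphN1 scaleN1r addrAC subrr add0r scalerA -rmorphM mulVf //.
    by rewrite scale1r.
  apply: (nz ((t1 - t2)^-1 * (r2 + (-1) * r1))); rewrite {1}ez.
  apply: dominated_graphZ => //; apply: dominated_graphD => //.
  exact: dominated_graphZ.
- move=> a w1 w2 u1 u2 [x1 [r1 [t1 [A1 [-> ->]]]]] [x2 [r2 [t2 [A2 [-> ->]]]]].
  exists (a%:C *: x1 + x2), (a * r1 + r2), (a * t1 + t2); split; first exact: L.
  congr pair; last by rewrite mulrDr mulrDl mulrA addrACA.
  by rewrite scalerDr scalerA -rmorphM rmorphD scalerDl addrACA.
- by exists 0, 0, 0; split=> //; rewrite scale0r addr0 mul0r addr0.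
- by move=> w u [x [r [t [Axr [-> ->]]]]]; exact: (graph_extend_bound t gA adm Axr).
Qed.

(* Chains of dominated graphs (up to empty members) have dominated unions;
   this is the inductivity hypothesis of Zorn's lemma. *)
Lemma dominated_graph_bigcup (F : set (set (X * R))) :
  (forall A, F A -> A !=set0 -> dominated_graph A) -> total_on F subset ->
  (exists2 A, F A & A !=set0) -> dominated_graph (\bigcup_(A in F) A).
Proof.
move=> gF Ftot [A0 FA0 [p0 A0p0]].
have gF' A p : F A -> A p -> dominated_graph A by move=> FA Ap; apply: gF => //; exists p.
split.
- move=> x r s [A1 F1 H1] [A2 F2 H2]; case: (Ftot _ _ F1 F2) => sub.
  + by have [Fa _ _ _] := gF' _ _ F2 H2; exact: Fa _ _ _ (sub _ H1) H2.
  + by have [Fa _ _ _] := gF' _ _ F1 H1; exact: Fa _ _ _ H1 (sub _ H2).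
- move=> a x y r s [A1 F1 H1] [A2 F2 H2]; case: (Ftot _ _ F1 F2) => sub.
  + have [_ La _ _] := gF' _ _ F2 H2.
    by exists A2 => //; exact: La _ _ _ _ _ (sub _ H1) H2.
  + have [_ La _ _] := gF' _ _ F1 H1.
    by exists A1 => //; exact: La _ _ _ _ _ H1 (sub _ H2).
- by exists A0 => //; have [_ _ Za _] := gF' _ _ FA0 A0p0.
- by move=> x r [A1 F1 H1]; have [_ _ _ Da] := gF' _ _ F1 H1; exact: Da.
Qed.

(* A
   maximal dominated graph containing G0 is total by graph_extend_dominated. *)
Lemma real_hahn_banach G0 : dominated_graph G0 -> exists F : X -> R,
  [/\ forall a x y, F (a%:C *: x + y) = a * F x + F y,
      forall x, F x <= c * rnorm x
    & forall x r, G0 (x, r) -> F x = r].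
Proof.
move=> g0.
pose P := fun A : set (X * R) => A = set0 \/ (dominated_graph A /\ G0 `<=` A).
have [A [PA maxA]] : exists A, P A /\ forall B, A `<` B -> ~ P B.
  apply: Zorn_bigcup => Fm FP Ftot.
  have [[A0 [FA0 nA0]] | hn] := pselect (exists A, Fm A /\ A !=set0); last first.
    left; apply/seteqP; split=> // p [A FA Ap]; exfalso; apply: hn.
    by exists A; split=> //; exists p.
  have PF A : Fm A -> A !=set0 -> dominated_graph A /\ G0 `<=` A.
    by move=> FA [p Ap]; case: (FP A FA) => // eA; rewrite eA in Ap.
  right; split.
    apply: dominated_graph_bigcup => //; last by exists A0.
    by move=> A FA nA; exact: (PF A FA nA).1.
  by move=> p Gp; exists A0 => //; exact: (PF _ FA0 nA0).2.
have [gA sA] : dominated_graph A /\ G0 `<=` A.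
  case: PA => // eA; exfalso; apply: (maxA G0); last by right; split.
  rewrite eA; split=> // h; have [_ _ Z _] := g0; exact: h _ Z.
have tot z : exists r, A (z, r).
  apply/not_existsP => nz; have [rho adm] := admissible_value_exists z gA.
  apply: (maxA (graph_extend A z rho)); last first.
    right; split; first by apply: graph_extend_dominated => // r; exact: nz.
    by move=> p /sA; exact: sub_graph_extend.
  split=> [|h]; first exact: sub_graph_extend.
  apply: (nz rho); apply: h.
  by exists 0, 0, 1; split; [case: gA | rewrite add0r scale1r add0r mul1r].
pose F z := projT1 (cid (tot z)).
have FA z : A (z, F z) by exact: projT2 (cid (tot z)).
have [Fa La _ Da] := gA.
exists F; split.
- by move=> a x y; apply: (Fa _ _ _ (FA _)); exact: La.
- by move=> x; exact: Da.
- by move=> x r Gxr; exact: Fa _ _ _ (FA _) (sA _ Gxr).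
Qed.

End DominatedExtension.

Section Complexification.
Variable F : X -> R.
Hypothesis F_lin : forall a x y, F (a%:C *: x + y) = a * F x + F y.

(* The complex-linear functional whose real part is F. *)
Definition complexify (x : X) : R[i] := (F x)%:C - 'i * (F ('i *: x))%:C.

Let F0 : F 0 = 0.
Proof. by have := F_lin 1 0 0; rewrite scale1r addr0 mul1r => h; lra. Qed.

Let FD x y : F (x + y) = F x + F y.
Proof. by have := F_lin 1 x y; rewrite scale1r mul1r. Qed.

Let FZ a x : F (a%:C *: x) = a * F x.
Proof. by have := F_lin a x 0; rewrite !addr0 F0 addr0. Qed.

Let N1C : (-1 : R[i]) = (-1)%:C.
Proof. by simpc. Qed.

Let FN x : F (- x) = - F x.
Proof. by rewrite -scaleN1r N1C FZ mulN1r. Qed.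

(* complexify F is complex linear: F (b *: w) splits along Re b and Im b,
   and F ('i *: 'i *: w) = - F w. *)
Lemma complexify_linear a u v :
  complexify (a *: u + v) = a * complexify u + complexify v.
Proof.
have Fsc b w : F (b *: w) = complex.Re b * F w + complex.Im b * F ('i *: w).
  rewrite -!FZ -FD; congr F.
  by rewrite {1}[b]complexE scalerDl scalerA [_ * 'i]mulrC.
have Fii w : F ('i *: ('i *: w)) = - F w.
  by rewrite scalerA -expr2 sqr_i N1C FZ mulN1r.
have expand (A B p q t w : R) :
    (A * p + B * q + t)%:C - 'i * (A * q + B * (- p) + w)%:C =
    (A%:C + 'i * B%:C) * (p%:C - 'i * q%:C) + (t%:C - 'i * w%:C).
  by simpc; apply/eqP; rewrite eq_complex /=; apply/andP; split; apply/eqP; ring.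
rewrite /complexify.
have -> : 'i *: (a *: u + v) = a *: ('i *: u) + 'i *: v.
  by rewrite scalerDr !scalerA mulrC.
by rewrite !FD (Fsc a u) (Fsc a ('i *: u)) Fii expand -complexE.
Qed.

(* Since |F| <= c * rnorm, both components of complexify F are bounded. *)
Lemma complexify_bound c : (forall x, F x <= c * rnorm x) ->
  forall w, `|complexify w| <= (2 * c)%:C * `|w|.
Proof.
move=> Fc; have Fabs w : `|F w| <= c * rnorm w.
  rewrite ler_norml Fc andbT; have := Fc (- w); rewrite FN rnormN; lra.
move=> w; rewrite /complexify; apply: (le_trans (ler_normB _ _)).
rewrite normrM normi mul1r !normcR rnormE -rmorphM -rmorphD lecR.
have := Fabs w; have := Fabs ('i *: w); rewrite rnormiZ; lra.
Qed.

End Complexification.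

Lemma closed_subspace_dist (M : set X) z : closed_subspace M -> ~ M z ->
  exists2 e : R, 0 < e & forall y, M y -> e%:C <= `|z - y|.
Proof.
case=> cM _ _ nMz.
have : nbhs z (~` M) by apply: open_nbhs_nbhs; split=> //; rewrite openC.
move=> /nbhs_ballP [eps eps0 sub].
have epsr : eps \is Num.real by rewrite gtr0_real.
exists (complex.Re eps); first by rewrite -ltcR RRe_real.
move=> y My; rewrite RRe_real // real_leNgt // ?normr_real //; apply/negP => h.
by apply: (sub y) => //; rewrite -ball_normE /ball_ /=.
Qed.

Definition coef_graph (M : set X) (z : X) : set (X * R) :=
  [set p | exists m l, M m /\ p = (m + l *: z, complex.Re l)].

(* If z is at distance >= e from M, then |l| e <= |m + l z|, so the
   coefficient functional is dominated by e^-1 * rnorm. *)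
Lemma coef_graph_dominated (M : set X) z e :
  closed_subspace M -> ~ M z -> 0 < e -> (forall y, M y -> e%:C <= `|z - y|) ->
  dominated_graph e^-1 (coef_graph M z).
Proof.
move=> cM nMz e0 he; have [_ M0 _] := cM.
split.
- move=> x r s [m1 [l1 [M1 [-> ->]]]] [m2 [l2 [M2 [E ->]]]].
  have [->|nl] := eqVneq l1 l2 => //; exfalso; apply: nMz.
  have E2 : (l1 - l2) *: z = m2 - m1.
    rewrite scalerBl; apply: (addIr (l2 *: z)); rewrite subrK.
    by apply: (addrI m1); rewrite E addrA subrKC.
  have -> : z = (l1 - l2)^-1 *: (m2 - m1).
    by rewrite -E2 scalerA mulVf ?subr_eq0 // scale1r.
  by apply: cs_scale => //; apply: cs_add => //; exact: cs_opp.
- move=> a x y r s [m1 [l1 [M1 [-> ->]]]] [m2 [l2 [M2 [-> ->]]]].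
  exists (a%:C *: m1 + m2), (a%:C * l1 + l2); split.
    by apply: cs_add => //; exact: cs_scale.
  congr pair; first by rewrite scalerDr scalerA scalerDl addrACA.
  by case: l1 l2 => p q [p' q']; simpc.
- by exists 0, 0; split=> //; rewrite scale0r addr0.
- move=> x r [m [l [Mm [-> ->]]]].
  rewrite -lecR rmorphM /= -rnormE.
  have [->|nl] := eqVneq l 0; first by rewrite /= mulr_ge0 // ?ler0c ?invr_ge0 ?ltW.
  have -> : m + l *: z = l *: (z + l^-1 *: m).
    by rewrite scalerDr scalerA mulfV // scale1r addrC.
  have hz : e%:C <= `|z + l^-1 *: m|.
    have := he (- (l^-1 *: m)); rewrite opprK; apply.
    by apply: cs_opp => //; exact: cs_scale.
  have hl : (complex.Re l)%:C <= `|l|.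
    by apply: le_trans (normc_ge_Re l); rewrite lecR; exact: ler_norm.
  apply: (le_trans hl).
  have -> : `|l| = (e^-1)%:C * (`|l| * e%:C).
    by rewrite mulrCA -rmorphM mulVf ?gt_eqF // mulr1.
  rewrite normrZ; apply: ler_wpM2l; first by rewrite ler0c invr_ge0 ltW.
  by apply: ler_wpM2l => //; exact: normr_ge0.
Qed.

Lemma separating_functional (M : set X) z : closed_subspace M -> ~ M z ->
  exists f : X -> R[i], [/\ forall a u v, f (a *: u + v) = a * f u + f v,
      exists2 K, 0 <= K & forall w, `|f w| <= K * `|w|,
      forall m, M m -> f m = 0 & f z = 1].
Proof.
move=> cM nMz; have [_ M0 _] := cM; have [e e0 he] := closed_subspace_dist cM nMz.
have c0 : 0 <= e^-1 by rewrite invr_ge0 ltW.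
have [F [FL Fc FG]] :=
  real_hahn_banach c0 (coef_graph_dominated cM nMz e0 he).
exists (complexify F); split.
- exact: complexify_linear.
- by exists (2 * e^-1)%:C; [rewrite ler0c; lra | exact: complexify_bound].
- move=> m Mm; rewrite /complexify.
  rewrite (FG m 0); last by exists m, 0; split=> //; rewrite scale0r addr0.
  rewrite (FG ('i *: m) 0) ?mulr0 ?subr0 //.
  by exists ('i *: m), 0; split; [exact: cs_scale | rewrite scale0r addr0].
- rewrite /complexify (FG z 1); last by exists 0, 1; split=> //; rewrite scale1r add0r.
  by rewrite (FG ('i *: z) 0) ?mulr0 ?subr0 //; exists 0, 'i; split=> //; rewrite add0r.
Qed.

Lemma closure_ballP (A : set X) p : closure A p <->
  forall e : R[i], 0 < e -> exists y, A y /\ `|p - y| < e.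
Proof.
split.
- move=> cl e e0; have [y [Ay By]] := cl _ (nbhsx_ballx p e e0).
  by exists y; split => //; move: By; rewrite -ball_normE.
- move=> h B /nbhs_ballP [e e0 sub]; have [y [Ay hy]] := h e e0.
  by exists y; split => //; apply: sub; rewrite -ball_normE.
Qed.

Lemma bounded_continuous (g : X -> X) K : 0 <= K ->
  (forall u v, g (u - v) = g u - g v) -> (forall w, `|g w| <= K * `|w|) ->
  continuous g.
Proof.
move=> K0 gB gK x; apply/cvgrPdist_lt => eps eps0.
have K1 : 0 < K + 1 by apply: lt_le_trans (ler_wpDl K0 (lexx 1)); exact: ltr01.
apply/nbhs_ballP; exists (eps / (K + 1)); first by apply: divr_gt0.
move=> y; rewrite -ball_normE /ball_ /= => hy.
rewrite -gB; apply: (le_lt_trans (gK _)).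
apply: (@le_lt_trans _ _ ((K + 1) * `|x - y|)).
  by apply: ler_wpM2r; [exact: normr_ge0 | rewrite lerDl ler01].
by rewrite -ltr_pdivlMl // mulrC.
Qed.

Lemma bounded_op0 (T : X -> X) : bounded_op T -> T 0 = 0.
Proof.
case=> L _; have := L 1 0 0; rewrite !scale1r addr0 => h.
by have := congr1 (fun w => w - T 0) h; rewrite subrr addrK => <-.
Qed.

Lemma bounded_opZ (T : X -> X) a u : bounded_op T -> T (a *: u) = a *: T u.
Proof.
by move=> bT; have [L _] := bT; have := L a u 0; rewrite (bounded_op0 bT) !addr0.
Qed.

Lemma preimage_closed_subspace (T : X -> X) (C : set X) :
  bounded_op T -> closed_subspace C -> closed_subspace (T @^-1` C).
Proof.
move=> bT [cC C0 CL]; have [L Tc] := bT; split.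
- by apply: preimage_closed => // y _; exact: Tc.
- by rewrite /= (bounded_op0 bT).
- by move=> a u v Cu Cv; rewrite /= L; exact: CL.
Qed.

Lemma lspan_sub (S C : set X) : closed_subspace C -> S `<=` C -> lspan S `<=` C.
Proof.
move=> cC sub v [n [c [s [Ss ->]]]]; have [_ C0 _] := cC.
apply: (big_ind C) => //; first by move=> u w Cu Cw; exact: cs_add.
by move=> i _; apply: cs_scale => //; exact: sub.
Qed.

Lemma clspan_sub (S C : set X) : closed_subspace C -> S `<=` C -> clspan S `<=` C.
Proof.
move=> cC sub; have [clC _ _] := cC; rewrite (closure_id C).1 //.
by apply: closureS; exact: lspan_sub.
Qed.

Lemma sub_lspan (S : set X) : S `<=` lspan S.
Proof.
move=> s Ss; exists 1%N, (fun _ => 1), (fun _ => s).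
by split=> //; rewrite big_ord1 scale1r.
Qed.

Lemma sub_clspan (S : set X) : S `<=` clspan S.
Proof. by move=> s /sub_lspan; exact: subset_closure. Qed.

Lemma lspan_lin (S : set X) a u v : lspan S u -> lspan S v -> lspan S (a *: u + v).
Proof.
move=> [n [c [s [Ss ->]]]] [m [d [t [St ->]]]].
exists (n + m)%N,
  (fun i => match fintype.split i with inl j => a * c j | inr j => d j end),
  (fun i => match fintype.split i with inl j => s j | inr j => t j end).
split; first by move=> i; case: (fintype.split i).
rewrite big_split_ord /= scaler_sumr; congr (_ + _); apply: eq_bigr => i _.
  by have := unsplitK (inl i : 'I_n + 'I_m) => /= ->; rewrite scalerA.
by have := unsplitK (inr i : 'I_n + 'I_m) => /= ->.
Qed.

(* The closed linear span is a closed subspace: closures of subspaces are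
   subspaces, by approximating u and v within e / 2 / (|a| + 1). *)
Lemma clspan_closed_subspace (S : set X) : closed_subspace (clspan S).
Proof.
split; first exact: closed_closure.
  apply: subset_closure; exists 0%N, (fun _ => 0), (fun _ => 0).
  by split; [case | rewrite big_ord0].
move=> a u v /closure_ballP hu /closure_ballP hv; apply/closure_ballP => e e0.
have a1 : 0 < `|a| + 1.
  by apply: lt_le_trans (ler_wpDl (normr_ge0 a) (lexx 1)); exact: ltr01.
set d := e / 2 / (`|a| + 1).
have d0 : 0 < d by rewrite !divr_gt0.
have [u' [Lu hu']] := hu _ d0; have [v' [Lv hv']] := hv _ d0.
exists (a *: u' + v'); split; first exact: lspan_lin.
have -> : a *: u + v - (a *: u' + v') = a *: (u - u') + (v - v').
  by rewrite scalerBr addrACA opprD.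
apply: (le_lt_trans (ler_normD _ _)); rewrite normrZ.
have h1 : `|a| * `|u - u'| <= `|a| * d.
  by apply: ler_wpM2l; [exact: normr_ge0 | exact: ltW].
apply: (le_lt_trans (lerD h1 (lexx _))).
apply: (@lt_le_trans _ _ (`|a| * d + d)); first by rewrite ltrD2l.
have -> : `|a| * d + d = (`|a| + 1) * d by rewrite mulrDl mul1r.
rewrite /d mulrCA mulfV ?gt_eqF // mulr1 ler_pdivrMr ?ltr0n //.
by rewrite ler_pMr // ler1n.
Qed.

Lemma Phi_mono (K K' : set (X -> X)) E : K `<=` K' -> Phi K E `<=` Phi K' E.
Proof.
move=> sKK'; apply: clspan_sub; first exact: clspan_closed_subspace.
by move=> _ [T [x [KT Ex ->]]]; apply: sub_clspan; exists T, x; split => //; exact: sKK'.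
Qed.

Lemma sub_op_norm_closure (K : set (X -> X)) :
  (forall T, K T -> bounded_op T) -> K `<=` op_norm_closure K.
Proof.
move=> bK T KT; split; first exact: bK.
move=> e e0; exists T; split => // w.
by rewrite subrr normr0 mulr_ge0 // ?ltW // normr_ge0.
Qed.

(* Each T x with T in cl(K) is a norm limit of vectors S x with S in K. *)
Lemma Phi_op_norm_closure_sub (K : set (X -> X)) E :
  Phi (op_norm_closure K) E `<=` Phi K E.
Proof.
apply: clspan_sub; first exact: clspan_closed_subspace.
move=> _ [T [x [[_ hT] Ex ->]]]; apply/closure_ballP => e e0.
have x1 : 0 < `|x| + 1.
  by apply: lt_le_trans (ler_wpDl (normr_ge0 x) (lexx 1)); exact: ltr01.
have [S [KS hS]] := hT _ (divr_gt0 e0 x1).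
exists (S x); split; first by apply: sub_lspan; exists S, x.
apply: (le_lt_trans (hS x)).
apply: (@lt_le_trans _ _ (e / (`|x| + 1) * (`|x| + 1))).
  by rewrite ltr_pM2l ?divr_gt0 // ltrDl ltr01.
by rewrite divfK ?gt_eqF.
Qed.

Lemma rank_one_nest_alg (N : set (set X)) (M : set X) (f : X -> R[i]) y :
  nest N -> (forall a u v, f (a *: u + v) = a * f u + f v) ->
  (exists2 K, 0 <= K & forall w, `|f w| <= K * `|w|) ->
  (forall m, M m -> f m = 0) -> (forall H, N H -> ~ H y -> H `<=` M) ->
  nest_alg N (fun u => f u *: y).
Proof.
move=> [Ncs _ _ _ _] flin [K K0 fK] fM HM; split; first split.
- by move=> a u v; rewrite flin scalerDl scalerA.
- apply: (@bounded_continuous _ (K * `|y|)); first by rewrite mulr_ge0 // normr_ge0.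
    move=> u v; have -> : u - v = (-1) *: v + u by rewrite scaleN1r addrC.
    by rewrite flin mulN1r scalerDl scaleNr addrC.
  by move=> w; rewrite normrZ mulrAC; apply: ler_wpM2r; [exact: normr_ge0 | exact: fK].
- move=> H NH u Hu; have [Hy|nHy] := pselect (H y); first exact: cs_scale (Ncs _ NH) Hy.
  by rewrite fM ?scale0r; [case: (Ncs _ NH) | exact: HM NH nHy u Hu].
Qed.

(* The key construction: if z in E lies outside a closed subspace M that
   contains every nest element missing y, then T y is in Phi_J0(E) for
   every T in J, as the image of z under T composed with a rank one operator
   of the nest algebra. *)
Lemma Phi_fin_rank_image (N : set (set X)) (J : set (X -> X)) (E M : set X) T y z :
  nest N -> bimodule N J -> J T -> closed_subspace M ->
  (forall H, N H -> ~ H y -> H `<=` M) -> E z -> ~ M z ->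
  Phi (fin_rank_part J) E (T y).
Proof.
move=> nN [bJ _ _ _ bR] JT cM HM Ez nMz.
have [f [flin fbd fM fz]] := separating_functional cM nMz.
have nA := rank_one_nest_alg nN flin fbd fM HM.
have J0 : fin_rank_part J (T \o (fun u => f u *: y)).
  split; first exact: bR.
  exists 1%N, (fun _ => T y) => _ [u _ <-].
  exists 1%N, (fun _ => f u), (fun _ => T y); split; first by move=> i; exists i.
  by rewrite big_ord1 /= bounded_opZ //; exact: bJ.
by apply: sub_clspan; exists (T \o (fun u => f u *: y)), z; rewrite /= fz scale1r.
Qed.

Definition nest_below (N : set (set X)) (x : X) : set X :=
  clspan (\bigcup_(H in [set H | N H /\ ~ H x]) H).

(* For T in J and x in E:
   if E is not inside nest_below N x, Phi_fin_rank_image applies to y = x;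
   otherwise x lies in nest_below N x, and every y in a nest element H
   missing x is handled with M = H and z = x, by totality of the nest. *)
Lemma Phi_sub_fin_rank (N : set (set X)) (J : set (X -> X)) (E : set X) :
  nest N -> bimodule N J -> Phi J E `<=` Phi (fin_rank_part J) E.
Proof.
move=> nN bJ; have [Ncs Ntot _ _ _] := nN; have [bJop _ _ _ _] := bJ.
apply: clspan_sub; first exact: clspan_closed_subspace.
move=> _ [T [x [JT Ex ->]]].
have below H : N H -> ~ H x -> H `<=` nest_below N x.
  by move=> NH nH y Hy; apply: sub_clspan; exists H.
have [[z [Ez nz]]|hn] := pselect (exists z, E z /\ ~ nest_below N x z).
  exact: Phi_fin_rank_image nN bJ JT (clspan_closed_subspace _) below Ez nz.
have xb : nest_below N x x by apply: contrapT => nx; apply: hn; exists x.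
suff : nest_below N x `<=` T @^-1` Phi (fin_rank_part J) E by apply.
apply: clspan_sub.
  exact: preimage_closed_subspace (bJop _ JT) (clspan_closed_subspace _).
move=> y [H [NH nHx] Hy].
apply: (Phi_fin_rank_image nN bJ JT (Ncs _ NH) _ Ex nHx).
move=> H' NH' nH'y; case: (Ntot _ _ NH NH') => // sub.
by exfalso; apply: nH'y; exact: sub _ Hy.
Qed.

End NestBimodules.

Local Close Scope complex_scope.
Unset Implicit Arguments.
Set Strict Implicit.

Theorem mainTheorem8 (R : realType) (X : completeNormedModType R[i])
  (N : set (set X)) (J : set (X -> X)) :
  nest N -> bimodule N J ->
  forall E : set X, N E ->
    Phi (fin_rank_part J) E = Phi (op_norm_closure (fin_rank_part J)) E /\
    Phi (op_norm_closure (fin_rank_part J)) E = Phi J E.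
Proof.
move=> nN bJ E _; have [bJop _ _ _ _] := bJ.
set J0 := fin_rank_part J; set Jc := op_norm_closure J0.
have s1 : Phi J0 E `<=` Phi Jc E.
  by apply: Phi_mono; apply: sub_op_norm_closure => T [JT _]; exact: bJop.
have s2 : Phi Jc E `<=` Phi J E.
  apply: subset_trans (Phi_op_norm_closure_sub (K := J0) (E := E)) _.
  by apply: Phi_mono => T [].
have s3 : Phi J E `<=` Phi J0 E by exact: (Phi_sub_fin_rank (E := E) nN bJ).
split; apply/seteqP; split => //.
- exact: subset_trans s2 s3.
- exact: subset_trans s3 s1.
Qed.
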